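(* Let $G=(V,E)$ and $H=(U,F)$ be finite simple graphs, each with $n$ vertices. Then the tree generation stage of the uniqueness tree algorithm (described in the context), which constructs the uniqueness tree $T(v)$ for every vertex $v$ of $G$ and of $H$, runs in time $O(n^6)$ in the worst case.
   Context: A simple graph is a finite, unweighted, undirected graph with no loops or multiple edges; the size $n$ of a graph is its number of vertices. Tree generation stage: for each of the two graphs and each vertex $v$ of it, build a rooted tree $T(v)$ whose nodes are labelled by vertices of the graph, level by level. Level $0$ consists of the root, labelled $v$. Given the current level, a node of that level is called unique if its label occurs exactly once among the labels of the nodes of that level. Each non-unique node becomes a leaf (no children); each unique node labelled $u$ receives one child for each neighbour $w$ of $u$ in the graph, labelled $w$; these children form the next level. This is repeated while some node on the current level is unique and the height of $T(v)$ is less than $n$. *)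

From mathcomp Require Import all_boot.
Set Implicit Arguments. Unset Strict Implicit. Unset Printing Implicit Defensive.

Definition simple_graph (T : finType) (e : rel T) : Prop :=
  symmetric e /\ irreflexive e.

Section UTree.
Variables (T : finType) (e : rel T).

(* A level of T(v) is the sequence of the labels of its nodes (in order). *)
Definition unique_on (s : seq T) (x : T) : bool := count_mem x s == 1.

Definition nbrs (u : T) : seq T := [seq w <- enum T | e u w].

(* next level: non-unique nodes are leaves, each unique node labelled u
   gets one child per neighbour w of u, labelled w *)
Definition next_level (s : seq T) : seq T :=
  flatten [seq (if unique_on s u then nbrs u else [::]) | u <- s].

(* Elementary-step cost of processing a level s (m := size s):
   - determining which nodes are unique by pairwise comparison: m * m,
   - deciding leaf / non-leaf for every node (and the loop test): m,
   - creating the children of each unique node by scanning the n vertices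
     for adjacency: n per unique node. *)
Definition level_cost (s : seq T) : nat :=
  size s * size s + size s + count (unique_on s) s * #|T|.

(* The loop continues while some node of the current level is unique and
   the current height is < n = #|T|; the fuel never binds (h < n). *)
Fixpoint gen_levels (fuel h : nat) (s : seq T) : seq (seq T) :=
  match fuel with
  | 0 => [:: s]
  | f.+1 => if has (unique_on s) s && (h < #|T|)
            then s :: gen_levels f h.+1 (next_level s)
            else [:: s]
  end.

Fixpoint gen_cost (fuel h : nat) (s : seq T) : nat :=
  match fuel with
  | 0 => size s
  | f.+1 => if has (unique_on s) s && (h < #|T|)
            then level_cost s + gen_cost f h.+1 (next_level s)
            else size s (* cost of the final loop test *)
  end.

Definition utree_levels (v : T) : seq (seq T) := gen_levels #|T| 0 [:: v].
Definition utree_cost (v : T) : nat := gen_cost #|T| 0 [:: v].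

End UTree.

Definition tree_stage_cost (T1 T2 : finType) (e1 : rel T1) (e2 : rel T2) : nat :=
  \sum_(v : T1) utree_cost e1 v + \sum_(u : T2) utree_cost e2 u.

(* Only unique nodes have children; a level has at most n unique nodes (their
   labels are distinct) and each has at most n children, so every level of
   T(v) has at most n^2 nodes and costs O(n^4).  The height of T(v) is at most
   n, so building T(v) costs O(n^5), and the 2n trees cost O(n^6). *)
From mathcomp Require Import all_boot.
From mathcomp Require Import zify.

Set Implicit Arguments.
Unset Strict Implicit.
Unset Printing Implicit Defensive.

Lemma count_mem_filter (T : eqType) (p : pred T) (x : T) (s : seq T) :
  count_mem x [seq y <- s | p y] = p x * count_mem x s.
Proof.
elim: s => [|z s IH] /=; first by rewrite muln0.
rewrite mulnDr -IH; case: (eqVneq z x) => [-> | ne]; case: (p _) => //=.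
all: by rewrite ?eqxx ?(negbTE ne) ?muln0.
Qed.

Lemma size_flatten_guarded (I T : Type) (p : pred I) (f : I -> seq T) m s :
  (forall i, size (f i) <= m) ->
  size (flatten [seq if p i then f i else [::] | i <- s]) <= count p s * m.
Proof.
move=> fm; elim: s => [|i s IH] //=.
by rewrite size_cat mulnDl leq_add //; case: (p i); rewrite ?mul1n.
Qed.

Section UniquenessTree.
Variables (T : finType) (e : rel T).

Lemma uniq_filter_unique_on (s : seq T) : uniq [seq u <- s | unique_on s u].
Proof.
apply: count_mem_uniq => x; rewrite count_mem_filter mem_filter.
case Ux: (unique_on s x) => //=; rewrite (eqP Ux).
by rewrite -has_pred1 has_count (eqP Ux).
Qed.

Lemma count_unique_on_le_card (s : seq T) : count (unique_on s) s <= #|T|.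
Proof.
by rewrite -size_filter -(card_uniqP (uniq_filter_unique_on s)) max_card.
Qed.

Lemma size_nbrs (u : T) : size (nbrs e u) <= #|T|.
Proof. by rewrite size_filter cardE count_size. Qed.

Lemma count_unique_on_mul_card_le (s : seq T) :
  count (unique_on s) s * #|T| <= #|T| ^ 2.
Proof. by rewrite expnS expn1 leq_mul2r count_unique_on_le_card orbT. Qed.

Lemma size_next_level_le (s : seq T) : size (next_level e s) <= #|T| ^ 2.
Proof.
apply: leq_trans (size_flatten_guarded (unique_on s) s size_nbrs) _.
exact: count_unique_on_mul_card_le.
Qed.

Lemma level_cost_le (s : seq T) :
  size s <= #|T| ^ 2 -> level_cost s <= 3 * #|T| ^ 4.
Proof.
rewrite /level_cost (_ : 4 = 2 + 2) // expnD => Hs.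
have Hsq : size s * size s <= #|T| ^ 2 * #|T| ^ 2 by rewrite leq_mul.
have Hchildren := count_unique_on_mul_card_le s.
have Hsquare : #|T| ^ 2 <= #|T| ^ 2 * #|T| ^ 2.
  by case: (#|T| ^ 2) => // m; rewrite leq_pmulr.
lia.
Qed.

Lemma gen_cost_le f h (s : seq T) : size s <= #|T| ^ 2 ->
  gen_cost e f h s <= f * (3 * #|T| ^ 4) + #|T| ^ 2.
Proof.
elim: f h s => [|f IH] h s Hs /=; first by rewrite add0n.
case: ifP => _; last by rewrite (leq_trans Hs) ?leq_addl.
rewrite mulSn -addnA leq_add ?level_cost_le //.
exact/IH/size_next_level_le.
Qed.

Lemma utree_cost_le (v : T) : utree_cost e v <= 4 * #|T| ^ 5.
Proof.
have n_gt0 : 0 < #|T| by apply/card_gt0P; exists v.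
have := @gen_cost_le #|T| 0 [:: v]; rewrite /= expn_gt0 n_gt0 => /(_ isT).
rewrite /utree_cost mulnCA -expnS => /leq_trans; apply.
by rewrite mulSn addnC leq_add2r leq_pexp2l.
Qed.

Lemma sum_utree_cost_le : \sum_(v : T) utree_cost e v <= 4 * #|T| ^ 6.
Proof.
apply: leq_trans (_ : _ <= \sum_(v : T) 4 * #|T| ^ 5) _.
  by apply: leq_sum => v _; apply: utree_cost_le.
by rewrite sum_nat_const mulnCA -expnS.
Qed.

End UniquenessTree.

Theorem lemma1 :
  exists c : nat,
    forall (T1 T2 : finType) (e1 : rel T1) (e2 : rel T2) (n : nat),
      simple_graph e1 -> simple_graph e2 ->
      #|T1| = n -> #|T2| = n ->
      tree_stage_cost e1 e2 <= c * n ^ 6.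
Proof.
exists 8 => T1 T2 e1 e2 n _ _ card1 card2.
have := sum_utree_cost_le e1; have := sum_utree_cost_le e2.
by rewrite /tree_stage_cost card1 card2; lia.
Qed.
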